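(* Let $H_1,H_2$ be separable Hilbert spaces, $M\in B(H_1\oplus H_2)$, and let $M_1:H_1\oplus H_2\to H_1$ and $M_2:H_1\oplus H_2\to H_2$ be the bounded linear operators such that $M(x\oplus y)=M_1(x\oplus y)\oplus M_2(x\oplus y)$ for all $x\oplus y\in H_1\oplus H_2$. Let $\{x_n\oplus y_n\}_{n\geqslant1}$ be a sequence in $H_1\oplus H_2$. If $\{x_n\oplus y_n\}_{n\geqslant1}$ is an $M$-frame for $H_1\oplus H_2$ with $M$-frame bounds $A$ and $B$, then: (i) for all $x\in H_1$, $A\|M_1^*(x)\|^2\leq\sum_{n=1}^{\infty}|\langle x,x_n\rangle|^2\leq B\|x\|^2$; (ii) for all $y\in H_2$, $A\|M_2^*(y)\|^2\leq\sum_{n=1}^{\infty}|\langle y,y_n\rangle|^2\leq B\|y\|^2$.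
   Context: $H_1\oplus H_2$ is the Hilbert space of pairs $x\oplus y$ with inner product $\langle x\oplus y,a\oplus b\rangle=\langle x,a\rangle+\langle y,b\rangle$. For a Hilbert space $H$ and $K\in B(H)$, a sequence $\{z_n\}_{n\geqslant1}$ in $H$ is a $K$-frame with bounds $A,B>0$ if $A\|K^*z\|^2\leq\sum_{n=1}^\infty|\langle z,z_n\rangle|^2\leq B\|z\|^2$ for all $z\in H$. *)

From mathcomp Require Import all_boot all_algebra.
From mathcomp Require Import complex.
From mathcomp Require Import all_classical all_reals all_analysis.
Set Implicit Arguments. Unset Strict Implicit. Unset Printing Implicit Defensive.
Import GRing.Theory Num.Theory.
Local Open Scope ring_scope.

Section Hilbert.
Variable R : realType.
Local Notation C := R[i].

Definition cabs2 (z : C) : R := complex.Re z ^+ 2 + complex.Im z ^+ 2.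

Variable V : lmodType C.
Variable ip : V -> V -> C.

Definition hnorm (x : V) : R := Num.sqrt (complex.Re (ip x x)).

Definition is_inner_product : Prop :=
  [/\ (forall (a : C) (x y z : V), ip (a *: x + y) z = a * ip x z + ip y z),
      (forall x y : V, ip y x = ((ip x y)^*)%C),
      (forall x : V, 0 <= complex.Re (ip x x)) &
      (forall x : V, ip x x = 0 -> x = 0)].

Definition hcomplete : Prop :=
  forall u : nat -> V,
    (forall e : R, 0 < e -> exists N : nat, forall m n : nat,
        (N <= m)%N -> (N <= n)%N -> hnorm (u m - u n) < e) ->
    exists l : V, forall e : R, 0 < e -> exists N : nat, forall n : nat,
        (N <= n)%N -> hnorm (u n - l) < e.

Definition hseparable : Prop :=
  exists d : nat -> V, forall (x : V) (e : R), 0 < e ->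
    exists n : nat, hnorm (x - d n) < e.

Definition separable_hilbert : Prop :=
  [/\ is_inner_product, hcomplete & hseparable].
End Hilbert.

Section Operators.
Variable R : realType.
Local Notation C := R[i].

Definition bounded_linear (V W : lmodType C) (ipV : V -> V -> C)
    (ipW : W -> W -> C) (T : V -> W) : Prop :=
  (forall (a : C) (x y : V), T (a *: x + y) = a *: T x + T y) /\
  exists c : R, forall x : V, hnorm ipW (T x) <= c * hnorm ipV x.

Definition is_adjoint (V W : lmodType C) (ipV : V -> V -> C)
    (ipW : W -> W -> C) (T : V -> W) (Ts : W -> V) : Prop :=
  forall (x : V) (y : W), ipW (T x) y = ipV x (Ts y).

Definition dsum_ip (V W : lmodType C) (ipV : V -> V -> C) (ipW : W -> W -> C)
    (u v : V * W) : C := ipV u.1 v.1 + ipW u.2 v.2.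

(* {z n} (n >= 1, here indexed from 0) is a K-frame for (H, ip) with bounds
   A, B:  A ||K^* z||^2 <= sum_n |<z, z_n>|^2 <= B ||z||^2 for all z,
   where K^* is the adjoint of K. *)
Definition is_K_frame (H : lmodType C) (ip : H -> H -> C) (K : H -> H)
    (zs : nat -> H) (A B : R) : Prop :=
  [/\ 0 < A, 0 < B &
   exists Ks : H -> H, is_adjoint ip ip K Ks /\
   forall z : H,
     ((A * hnorm ip (Ks z) ^+ 2)%:E <= \sum_(0 <= n <oo) (cabs2 (ip z (zs n)))%:E)%E /\
     (\sum_(0 <= n <oo) (cabs2 (ip z (zs n)))%:E <= (B * hnorm ip z ^+ 2)%:E)%E].
End Operators.

From mathcomp Require Import all_boot all_algebra.
From mathcomp Require Import complex.
From mathcomp Require Import all_classical all_reals all_analysis.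
Import GRing.Theory Num.Theory.
Local Open Scope ring_scope.

(* Test the M-frame inequalities at x (+) 0.  Its inner product with
   x_n (+) y_n is <x, x_n> and its norm is ||x||; moreover
   M^*(x (+) 0) = M_1^* x, since for every u
   <u, M^*(x (+) 0)> = <M u, x (+) 0> = <M_1 u, x> = <u, M_1^* x>
   and a vector is determined by its inner products.  Symmetrically at
   0 (+) y. *)

Section InnerProduct.
Context {R : realType} {V : lmodType R[i]} {ip : V -> V -> R[i]}.
Hypothesis ip_inner : is_inner_product ip.

Lemma ipBl x y z : ip (x - y) z = ip x z - ip y z.
Proof.
case: ip_inner => lin _ _ _.
by rewrite addrC -scaleN1r lin mulN1r addrC.
Qed.

Lemma ip0l z : ip 0 z = 0.
Proof. by have := ipBl 0 0 z; rewrite !subrr. Qed.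

Lemma ipBr x y z : ip z (x - y) = ip z x - ip z y.
Proof.
case: (ip_inner) => _ sym _ _.
by rewrite sym ipBl rmorphB /= -!sym.
Qed.

Lemma ip0r z : ip z 0 = 0.
Proof. by have := ipBr 0 0 z; rewrite !subrr. Qed.

Lemma ipr_inj v w : (forall u, ip u v = ip u w) -> v = w.
Proof.
case: (ip_inner) => _ _ _ definite eq_vw.
by apply/eqP; rewrite -subr_eq0; apply/eqP/definite; rewrite ipBr eq_vw subrr.
Qed.

Lemma ip_self_real x : ip x x = (complex.Re (ip x x))%:C%C.
Proof.
case: ip_inner => _ sym _ _.
have Im0 : complex.Im (ip x x) = 0.
  by have := ImJ_sub (ip x x); rewrite -sym subrr !mul0r => -[].
by rewrite [LHS]complexE Im0 mulr0 addr0.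
Qed.

End InnerProduct.

Section DirectSum.
Context {R : realType} {H1 H2 : lmodType R[i]}.
Context {ip1 : H1 -> H1 -> R[i]} {ip2 : H2 -> H2 -> R[i]}.
Hypotheses (ip1_inner : is_inner_product ip1) (ip2_inner : is_inner_product ip2).
Local Notation ip := (dsum_ip ip1 ip2).

Lemma dsum_inner_product : is_inner_product ip.
Proof.
case: (ip1_inner) => lin1 sym1 pos1 def1; case: (ip2_inner) => lin2 sym2 pos2 def2.
split=> [a u v w | u v | u | [x y]]; rewrite /dsum_ip /=.
- by rewrite lin1 lin2 mulrDr addrACA.
- by rewrite sym1 sym2 rmorphD.
- by rewrite raddfD /= addr_ge0.
- rewrite (ip_self_real ip1_inner) (ip_self_real ip2_inner) -raddfD /=.
  move=> -[/eqP]; rewrite paddr_eq0 // => /andP[/eqP Re1 /eqP Re2].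
  have ip1_0 : ip1 x x = 0 by rewrite ip_self_real // Re1.
  have ip2_0 : ip2 y y = 0 by rewrite ip_self_real // Re2.
  by rewrite (def1 x ip1_0) (def2 y ip2_0).
Qed.

Lemma dsum_ip_inl x u : ip (x, 0) u = ip1 x u.1.
Proof. by rewrite /dsum_ip ip0l // addr0. Qed.

Lemma dsum_ip_inr y u : ip (0, y) u = ip2 y u.2.
Proof. by rewrite /dsum_ip ip0l // add0r. Qed.

Lemma hnorm_dsum_inl x : hnorm ip (x, 0) = hnorm ip1 x.
Proof. by rewrite /hnorm dsum_ip_inl. Qed.

Lemma hnorm_dsum_inr y : hnorm ip (0, y) = hnorm ip2 y.
Proof. by rewrite /hnorm dsum_ip_inr. Qed.

Context {M : H1 * H2 -> H1 * H2} {M1 : H1 * H2 -> H1} {M2 : H1 * H2 -> H2}.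
Hypothesis M_split : forall u, M u = (M1 u, M2 u).
Context {Ms : H1 * H2 -> H1 * H2}.
Hypothesis Ms_adjoint : is_adjoint ip ip M Ms.

Lemma adjoint_dsum_inl {M1s : H1 -> H1 * H2} :
  is_adjoint ip ip1 M1 M1s -> forall x, Ms (x, 0) = M1s x.
Proof.
move=> M1s_adjoint x; apply: (ipr_inj dsum_inner_product) => u.
by rewrite -Ms_adjoint -M1s_adjoint M_split /dsum_ip ip0r // addr0.
Qed.

Lemma adjoint_dsum_inr {M2s : H2 -> H1 * H2} :
  is_adjoint ip ip2 M2 M2s -> forall y, Ms (0, y) = M2s y.
Proof.
move=> M2s_adjoint y; apply: (ipr_inj dsum_inner_product) => u.
by rewrite -Ms_adjoint -M2s_adjoint M_split /dsum_ip ip0r // add0r.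
Qed.

End DirectSum.

Theorem proposition2p4 (R : realType) (H1 H2 : lmodType R[i])
  (ip1 : H1 -> H1 -> R[i]) (ip2 : H2 -> H2 -> R[i])
  (hH1 : separable_hilbert ip1) (hH2 : separable_hilbert ip2)
  (M : H1 * H2 -> H1 * H2)
  (hM : bounded_linear (dsum_ip ip1 ip2) (dsum_ip ip1 ip2) M)
  (M1 : H1 * H2 -> H1) (M2 : H1 * H2 -> H2)
  (hM1 : bounded_linear (dsum_ip ip1 ip2) ip1 M1)
  (hM2 : bounded_linear (dsum_ip ip1 ip2) ip2 M2)
  (hMdec : forall u : H1 * H2, M u = (M1 u, M2 u))
  (M1s : H1 -> H1 * H2) (M2s : H2 -> H1 * H2)
  (hM1s : is_adjoint (dsum_ip ip1 ip2) ip1 M1 M1s)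
  (hM2s : is_adjoint (dsum_ip ip1 ip2) ip2 M2 M2s)
  (xs : nat -> H1) (ys : nat -> H2) (A B : R) :
  is_K_frame (dsum_ip ip1 ip2) M (fun n => (xs n, ys n)) A B ->
  (forall x : H1,
     ((A * hnorm (dsum_ip ip1 ip2) (M1s x) ^+ 2)%:E
        <= \sum_(0 <= n <oo) (cabs2 (ip1 x (xs n)))%:E)%E /\
     (\sum_(0 <= n <oo) (cabs2 (ip1 x (xs n)))%:E
        <= (B * hnorm ip1 x ^+ 2)%:E)%E) /\
  (forall y : H2,
     ((A * hnorm (dsum_ip ip1 ip2) (M2s y) ^+ 2)%:E
        <= \sum_(0 <= n <oo) (cabs2 (ip2 y (ys n)))%:E)%E /\
     (\sum_(0 <= n <oo) (cabs2 (ip2 y (ys n)))%:E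
        <= (B * hnorm ip2 y ^+ 2)%:E)%E).
Proof.
case: hH1 => ip1_inner _ _; case: hH2 => ip2_inner _ _.
move=> [_ _ [Ms [Ms_adjoint frame]]]; split=> [x | y].
- have := frame (x, 0).
  rewrite (adjoint_dsum_inl ip1_inner ip2_inner hMdec Ms_adjoint hM1s).
  rewrite (hnorm_dsum_inl ip2_inner).
  by under eq_eseriesr do rewrite (dsum_ip_inl ip2_inner).
- have := frame (0, y).
  rewrite (adjoint_dsum_inr ip1_inner ip2_inner hMdec Ms_adjoint hM2s).
  rewrite (hnorm_dsum_inr ip1_inner).
  by under eq_eseriesr do rewrite (dsum_ip_inr ip1_inner).
Qed.
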